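(* Let $\Gamma=(N,A,u)$ be a finite normal form game. If $\operatorname{Aut}(\Gamma)$ has a subgroup $G$ isomorphic to $S_N$ with $G_N=\{\mathrm{id}_\Gamma\}$, then $\Gamma$ is $n$-transitively standard symmetric; that is, $\operatorname{Aut}(\Gamma)$ is player $n$-transitive and $\operatorname{Aut}(\Gamma)$ has a subgroup that is player transitive and strategy trivial.
   Context: A game bijection $g=(\pi;(\tau_i)_{i\in N})$ of $\Gamma$ consists of $\pi\in S_N$ (its player permutation) and bijections $\tau_i:A_i\to A_{\pi(i)}$; write $g(i)=\pi(i)$, $g(s_i)=\tau_i(s_i)$, $g(s)=(\tau_{\pi^{-1}(j)}(s_{\pi^{-1}(j)}))_{j\in N}$; composition is $(\eta;(\phi_j))\circ(\pi;(\tau_i))=(\eta\circ\pi;(\phi_{\pi(i)}\circ\tau_i)_{i\in N})$, identity $\mathrm{id}_\Gamma=(\mathrm{id}_N;(\mathrm{id}_{A_i}))$. $g$ is an automorphism if $u_i(s)=u_{g(i)}(g(s))$ for all $i\in N$, $s\in A$; $\operatorname{Aut}(\Gamma)$ is the group of automorphisms. For a subgroup $G$, $G_N=\{g\in G: g(i)=i\ \forall i\in N\}$. A subgroup is player transitive if its player permutations act transitively on $N$, player $n$-transitive if its set of player permutations is all of $S_N$, and strategy trivial if for each $i\in N$, $g(s_i)=s_i$ for all $g$ in it with $g(i)=i$ and all $s_i\in A_i$. *)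

From HB Require Import structures.
From mathcomp Require Import all_boot all_order all_algebra all_fingroup.
Set Implicit Arguments. Unset Strict Implicit. Unset Printing Implicit Defensive.

(* A game bijection g = (pi; (tau_i)_i) is encoded as the permutation of the
   finite disjoint union  PS A = {i : 'I_n & A i}  of all (player, strategy)
   pairs sending (i, s_i) to (pi i, tau_i s_i).  Such a permutation is exactly
   one that maps fibres to fibres, i.e. tag (sigma x) = pi (tag x) for a
   (necessarily unique) player permutation pi. *)

Section Game.
Variables (n : nat) (A : 'I_n -> finType).

Definition PS := {i : 'I_n & A i}.
Definition profile := {dffun forall i : 'I_n, A i}.

Definition gb_player (sigma : {perm PS}) (pi : {perm 'I_n}) : Prop :=
  forall x : PS, tag (sigma x) = pi (tag x).

Definition is_game_bij (sigma : {perm PS}) : Prop :=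
  exists pi : {perm 'I_n}, gb_player sigma pi.

Definition gb_profile (sigma : {perm PS}) (pi : {perm 'I_n}) (s t : profile) : Prop :=
  forall k : 'I_n, sigma (Tagged A (s k)) = Tagged A (t (pi k)).

Variable R : Type.

Definition is_aut (u : 'I_n -> profile -> R) (sigma : {perm PS}) : Prop :=
  exists pi : {perm 'I_n}, gb_player sigma pi /\
    forall (i : 'I_n) (s t : profile), gb_profile sigma pi s t ->
      u i s = u (pi i) t.

Definition aut_player_ntransitive (u : 'I_n -> profile -> R) : Prop :=
  forall pi : {perm 'I_n}, exists sigma : {perm PS}, is_aut u sigma /\ gb_player sigma pi.

Definition player_transitive (H : {set {perm PS}}) : Prop :=
  forall i j : 'I_n, exists2 sigma, sigma \in H &
    exists pi : {perm 'I_n}, gb_player sigma pi /\ pi i = j.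

Definition strategy_trivial (H : {set {perm PS}}) : Prop :=
  forall (i : 'I_n) (sigma : {perm PS}), sigma \in H ->
    forall pi : {perm 'I_n}, gb_player sigma pi -> pi i = i ->
      forall s : A i, sigma (Tagged A s) = Tagged A s.

Definition ntransitively_standard_symmetric (u : 'I_n -> profile -> R) : Prop :=
  aut_player_ntransitive u /\
  exists H : {group {perm PS}},
    (forall sigma, sigma \in H -> is_aut u sigma) /\
    player_transitive H /\ strategy_trivial H.

End Game.

(* Two player permutations of elements of G agree only if the elements agree
   (their quotient moves no player), so G embeds into S_N; having order n! it
   maps onto S_N.  This gives player n-transitivity, and a lift g in G of the
   cycle i |-> i + 1 generates a subgroup that is player transitive.  Since a
   power of an n-cycle fixing one point is the identity, an element of <[g]>
   fixing a player moves no player at all, hence is trivial. *)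
From HB Require Import structures.
From mathcomp Require Import all_boot all_order all_algebra all_fingroup.
From mathcomp Require Import zify.
Set Implicit Arguments. Unset Strict Implicit. Unset Printing Implicit Defensive.

Section PlayerPermutation.
Variables (n : nat) (A : 'I_n -> finType).
Implicit Types (s t : {perm PS A}) (p q : {perm 'I_n}).

Lemma gb_player_mul s t p q :
  gb_player s p -> gb_player t q -> gb_player (s * t)%g (p * q)%g.
Proof. by move=> hs ht x; rewrite !permM ht hs. Qed.

Lemma gb_player_inv s p : gb_player s p -> gb_player s^-1%g p^-1%g.
Proof. by move=> hs x; rewrite -{2}(permKV s x) hs permK. Qed.

Lemma gb_player_exp s p k : gb_player s p -> gb_player (s ^+ k)%g (p ^+ k)%g.
Proof.
move=> hs; elim: k => [|k IH]; first by move=> x; rewrite !expg0 !perm1.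
by rewrite !expgSr; apply: gb_player_mul.
Qed.

Definition player_perm s : {perm 'I_n} :=
  odflt 1%g [pick p : {perm 'I_n} | [forall x, tag (s x) == p (tag x)]].

Lemma player_permP s : is_game_bij s -> gb_player s (player_perm s).
Proof.
case=> p hp; rewrite /player_perm; case: pickP => [q /forallP hq x | /(_ p)].
  exact/eqP.
by move/negP; case; apply/forallP => x; rewrite hp.
Qed.

Variable G : {group {perm PS A}}.
Hypothesis G_bij : forall s, s \in G -> is_game_bij s.
Hypothesis G_N : forall s, s \in G -> (forall x, tag (s x) = tag x) -> s = 1%g.

Lemma gb_player_inj_in s t p :
  s \in G -> t \in G -> gb_player s p -> gb_player t p -> s = t.
Proof.
move=> sG tG hs ht.
have ts1 : (t * s^-1)%g = 1%g.
  apply: G_N => [|x]; first by rewrite groupM ?groupV.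
  by rewrite (gb_player_mul ht (gb_player_inv hs)) mulgV perm1.
by apply/eqP; rewrite eq_sym eq_mulgV1 ts1.
Qed.

Lemma player_perm_inj_in : {in G &, injective player_perm}.
Proof.
move=> s t sG tG est; apply: (gb_player_inj_in sG tG (player_permP (G_bij sG))).
by rewrite est; apply: player_permP; apply: G_bij.
Qed.

Lemma player_perm_onto : #|G| = #|[set: {perm 'I_n}]| ->
  forall p, exists2 s, s \in G & gb_player s p.
Proof.
move=> cardG p.
have : p \in player_perm @: G.
  suff -> : player_perm @: G = [set: {perm 'I_n}] by rewrite inE.
  apply/eqP; rewrite eqEcard subsetT (card_in_imset player_perm_inj_in) cardG.
  exact: leqnn.
by case/imsetP=> s sG ->; exists s => //; apply: player_permP; apply: G_bij.
Qed.

End PlayerPermutation.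

Section CyclicShift.
Variable n : nat.

Definition ordS_perm : {perm 'I_n} := perm (@ordS_inj n).

Lemma ordS_permX k (j : 'I_n) : val ((ordS_perm ^+ k)%g j) = (j + k) %% n.
Proof.
elim: k => [|k IH]; first by rewrite expg0 perm1 addn0 modn_small.
by rewrite expgSr permM permE /= IH -addn1 modnDml addn1 addnS.
Qed.

Lemma ordS_perm_transitive (i j : 'I_n) : (ordS_perm ^+ (j + n - i))%g i = j.
Proof.
apply/val_inj; rewrite ordS_permX /=.
have -> : i + (j + n - i) = j + n by have := ltn_ord i; lia.
by rewrite modnDr modn_small.
Qed.

Lemma ordS_permX_fixed k (i : 'I_n) :
  (ordS_perm ^+ k)%g i = i -> (ordS_perm ^+ k)%g = 1%g.
Proof.
move/(congr1 val); rewrite ordS_permX => fix_i.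
have kn0 : k %% n = 0.
  have : i + k == i + 0 %[mod n] by rewrite fix_i addn0 modn_small.
  by rewrite eqn_modDl mod0n => /eqP.
apply/permP => j; apply/val_inj.
by rewrite ordS_permX perm1 -modnDmr kn0 addn0 modn_small.
Qed.

End CyclicShift.

Section ShiftLift.
Variables (n : nat) (A : 'I_n -> finType) (g : {perm PS A}).
Hypothesis g_shift : gb_player g (ordS_perm n).

Lemma shift_lift_player_transitive : player_transitive <[g]>%g.
Proof.
move=> i j; exists (g ^+ (j + n - i))%g; first exact: mem_cycle.
exists (ordS_perm n ^+ (j + n - i))%g.
by split; [apply: gb_player_exp | apply: ordS_perm_transitive].
Qed.

Hypothesis g_N : forall s, s \in <[g]>%g -> (forall x, tag (s x) = tag x) -> s = 1%g.

Lemma shift_lift_strategy_trivial : strategy_trivial <[g]>%g.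
Proof.
move=> i _ /cycleP [k ->] p hp fix_i a.
have hk := gb_player_exp k g_shift.
have shift1 : (ordS_perm n ^+ k)%g = 1%g.
  apply: (@ordS_permX_fixed n k i).
  by rewrite -{2}fix_i -(hk (Tagged A a)) (hp (Tagged A a)).
have -> : (g ^+ k)%g = 1%g.
  by apply: g_N => [|x]; [apply: mem_cycle | rewrite hk shift1 perm1].
by rewrite perm1.
Qed.

End ShiftLift.

Theorem proposition5p6 (R : realFieldType) (n : nat) (A : 'I_n -> finType)
    (u : 'I_n -> profile A -> R)
    (A_nonempty : forall i : 'I_n, 0 < #|A i|)
    (G : {group {perm PS A}})
    (G_aut : forall sigma, sigma \in G -> is_aut u sigma)
    (G_iso : G \isog [set: {perm 'I_n}])
    (G_N : forall sigma, sigma \in G ->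
             (forall x : PS A, tag (sigma x) = tag x) -> sigma = 1%g) :
  ntransitively_standard_symmetric u.
Proof.
have G_bij s : s \in G -> is_game_bij s.
  by move=> /G_aut [p [hp _]]; exists p.
have lift := player_perm_onto G_bij G_N (card_isog G_iso).
split=> [p | ].
  by have [s sG hs] := lift p; exists s; split=> //; apply: G_aut.
have [g gG hg] := lift (ordS_perm n).
have gG_sub : <[g]>%g \subset G by rewrite cycle_subG.
exists <[g]>%G; split; [|split].
- by move=> s /(subsetP gG_sub); apply: G_aut.
- exact: shift_lift_player_transitive.
- by apply: shift_lift_strategy_trivial => // s /(subsetP gG_sub); apply: G_N.
Qed.
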